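(* Let $m\ge3$, $\mu>0$, $c\in\mathbb{R}^m_{\ge0}$ with matrix form $\mathbf{C}\in\mathbb{R}^{L\times R}_{\ge0}$ ($\mathbf{C}_{ij}=c_{(i,j)}$), demands $d=(d_L,d_R)$ with $d_L\in\Delta^L$, $d_R\in\Delta^R$, and $\mathbf{K}=\exp(-\mathbf{C}/\mu)$ entrywise. Let $u\in\mathbb{R}^L_{>0}$, $v\in\mathbb{R}^R_{>0}$, $\mathbf{X}=\mathrm{diag}(u)\mathbf{K}\mathrm{diag}(v)$, and $x\in\mathbb{R}^m_{>0}$ the vectorization $x_{(i,j)}=\mathbf{X}_{ij}$. Suppose that for some $\Delta\ge0$, $$\|\mathbf{X}\mathbf{1}-d_L\|_1+\|\mathbf{X}^\top\mathbf{1}-d_R\|_1\le\Delta.$$ Then $\hat x:=x/\|x\|_1\in\Delta^m$ satisfies $$\langle c,\hat x\rangle+\mu H(\hat x)\le\mathrm{OPT}_\mu(d)+3C\Delta+\mu m^{-30},\qquad C:=2(\|c\|_\infty+33\mu\log m).$$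
   Context: $L,R$ are finite nonempty sets, $m=|L||R|$, and coordinates of $\mathbb{R}^m$ are indexed by pairs $(i,j)\in L\times R$. $\mathbf{B}\in\{0,1\}^{m\times(|L|+|R|)}$ is the unsigned edge-vertex incidence matrix of the complete bipartite graph on $L\cup R$: $\mathbf{B}_{(i,j),v}=1$ iff $v\in\{i,j\}$. $H(x)=\sum_i x_i\log x_i$ ($0\log0=0$, natural log). $\mathrm{OPT}_\mu(d)=\min_{x\in\Delta^m,\ \mathbf{B}^\top x=d}\ \langle c,x\rangle+\mu H(x)$. $\Delta^k$ denotes the probability simplex. *)

From HB Require Import structures.
From mathcomp Require Import all_boot all_order all_algebra.
From mathcomp Require Import all_classical all_reals all_analysis.
Set Implicit Arguments. Unset Strict Implicit. Unset Printing Implicit Defensive.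
Import Order.TTheory GRing.Theory Num.Theory.
Local Open Scope ring_scope.
Local Open Scope classical_set_scope.

Definition xlogx {T : realType} (t : T) : T := if t == 0 then 0 else t * ln t.

Definition Hent {T : realType} {I : finType} (x : I -> T) : T :=
  \sum_(i : I) xlogx (x i).

Definition in_simplex {T : realType} {I : finType} (x : I -> T) : Prop :=
  (forall i, 0 <= x i) /\ \sum_(i : I) x i = 1.

(* B^T x = d with B the edge-vertex incidence matrix of K_{L,R},
   coordinates of x indexed by pairs (i,j) in L x R. *)
Definition marg_ok {T : realType} {L R : finType}
  (x : (L * R)%type -> T) (dL : L -> T) (dR : R -> T) : Prop :=
  (forall i : L, \sum_(j : R) x (i, j) = dL i) /\
  (forall j : R, \sum_(i : L) x (i, j) = dR j).

Definition reg_obj {T : realType} {I : finType} (c : I -> T) (mu : T) (x : I -> T) : T :=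
  \sum_(i : I) c i * x i + mu * Hent x.

Definition OPT {T : realType} {L R : finType}
  (c : (L * R)%type -> T) (mu : T) (dL : L -> T) (dR : R -> T) : T :=
  inf [set reg_obj c mu x | x in [set x | in_simplex x /\ marg_ok x dL dR]].

From HB Require Import structures.
From mathcomp Require Import all_boot all_order all_algebra.
From mathcomp Require Import all_classical all_reals all_analysis.
From mathcomp Require Import lra ring.
Set Implicit Arguments. Unset Strict Implicit. Unset Printing Implicit Defensive.
Import Order.TTheory GRing.Theory Num.Theory.
Local Open Scope ring_scope.

(* The scaled matrix diag(u) K diag(v), normalized, is a Gibbs plan
   exp((a_i + b_j - c_ij)/mu) with potentials a = mu log(u/S), b = mu log v.
   Its objective equals the dual objective of (a, b) except for the marginal
   violations, which cost at most the oscillation of the potentials times the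
   l1 error.  Clipping a and b from below at (max - M) with M = max c + mu log N
   bounds the oscillation by M while changing the Gibbs plan by at most 1/N per
   entry; weak duality with the clipped potentials then gives the bound, with
   N = m^31 producing the additive term mu m^-30. *)

Lemma xlogx_ge_dual (T : realType) (t w : T) : 0 <= t ->
  t * w + t - expR w <= xlogx t.
Proof.
move=> t0; rewrite /xlogx; have [->|tn0] := eqVneq t 0.
  by rewrite mul0r add0r sub0r oppr_le0 expR_ge0.
have tp : 0 < t by rewrite lt_def tn0 t0.
have h := expR_ge1Dx (w - ln t).
rewrite expRB lnK ?posrE // in h.
have h2 : t * (1 + (w - ln t)) <= t * (expR w / t) by rewrite ler_pM2l.
rewrite mulrCA divff ?mulr1 // in h2.
rewrite mulrDr mulr1 mulrDr mulrN in h2; lra.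
Qed.

Lemma l1_normalize_le (T : realType) (I : finType) (f g : I -> T) :
  (forall i, 0 <= f i) -> \sum_i g i = 1 -> 0 < \sum_i f i ->
  \sum_i `|f i / (\sum_k f k) - g i| <= 2 * \sum_i `|f i - g i|.
Proof.
move=> f0 g1 S0; set S := \sum_k f k.
have mass_err : `|1 - S| <= \sum_i `|f i - g i|.
  rewrite -g1 -sumrB; apply: le_trans (ler_norm_sum _ _ _) _.
  by apply: ler_sum => i _; rewrite distrC.
have rescale_err : \sum_i `|f i / S - f i| = `|1 - S|.
  have -> : \sum_i `|f i / S - f i| = \sum_i f i * `|S^-1 - 1|.
    apply: eq_bigr => i _; rewrite -{2}(mulr1 (f i)) -mulrBr normrM.
    by rewrite ger0_norm.
  rewrite -mulr_suml -/S.
  have -> : 1 - S = S * (S^-1 - 1) by rewrite mulrBr mulr1 divff ?gt_eqF.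
  by rewrite normrM (ger0_norm (ltW S0)).
have tri : \sum_i `|f i / S - g i| <= \sum_i (`|f i / S - f i| + `|f i - g i|).
  by apply: ler_sum => i _; apply: ler_distD.
rewrite big_split /= rescale_err in tri; lra.
Qed.

Lemma centered_pairing_le (T : realType) (I : finType) (f g w : I -> T) (w0 r : T) :
  \sum_i f i = \sum_i g i -> (forall i, `|w i - w0| <= r) ->
  \sum_i w i * f i - \sum_i w i * g i <= r * \sum_i `|f i - g i|.
Proof.
move=> fg hw.
have -> : \sum_i w i * f i - \sum_i w i * g i = \sum_i (w i - w0) * (f i - g i).
  rewrite -sumrB; under [RHS]eq_bigr do rewrite mulrBl !mulrBr.
  rewrite !sumrB -!mulr_sumr fg; ring.
rewrite mulr_sumr; apply: ler_sum => i _.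
by apply: le_trans (ler_norm _) _; rewrite normrM ler_wpM2r.
Qed.

Definition clip (T : realType) (I : Type) (t : T) (a : I -> T) (i : I) : T :=
  Num.max (a i) t.

Lemma clip_ge (T : realType) (I : Type) (t : T) (a : I -> T) i : a i <= clip t a i.
Proof. by rewrite le_max lexx. Qed.

Lemma clip_range (T : realType) (I : Type) (A M : T) (a : I -> T) i :
  0 <= M -> a i <= A -> A - M <= clip (A - M) a i <= A.
Proof. by move=> M0 aA; rewrite le_max lexx orbT ge_max aA /=; lra. Qed.

Section GibbsPlans.
Variables (T : realType) (L R : finType).
Variables (c : (L * R)%type -> T) (mu : T).
Hypothesis mu_gt0 : 0 < mu.

Definition gibbs (a : L -> T) (b : R -> T) (e : (L * R)%type) : T :=
  expR ((a e.1 + b e.2 - c e) / mu).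

Definition lmarg (y : (L * R)%type -> T) (i : L) : T := \sum_j y (i, j).
Definition rmarg (y : (L * R)%type -> T) (j : R) : T := \sum_i y (i, j).

Definition marg_err (y : (L * R)%type -> T) (dL : L -> T) (dR : R -> T) : T :=
  \sum_i `|lmarg y i - dL i| + \sum_j `|rmarg y j - dR j|.

Lemma sum_pair (F : (L * R)%type -> T) :
  \sum_(e : (L * R)%type) F e = \sum_i \sum_j F (i, j).
Proof. by rewrite (pair_bigA _ (fun i j => F (i, j))); apply: eq_bigr => -[]. Qed.

Lemma sum_lmarg y : \sum_i lmarg y i = \sum_e y e.
Proof. by rewrite sum_pair. Qed.

Lemma sum_rmarg y : \sum_j rmarg y j = \sum_e y e.
Proof. by rewrite sum_pair exchange_big. Qed.

Lemma sum_mul_potentials y (a : L -> T) (b : R -> T) :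
  \sum_(e : (L * R)%type) y e * (a e.1 + b e.2) =
  \sum_i a i * lmarg y i + \sum_j b j * rmarg y j.
Proof.
rewrite sum_pair.
under eq_bigr do under eq_bigr do rewrite mulrDr.
under eq_bigr do rewrite big_split /=.
rewrite big_split /=; congr (_ + _).
  by apply: eq_bigr => i _; rewrite mulr_sumr; apply: eq_bigr => j _; rewrite mulrC.
rewrite exchange_big /=; apply: eq_bigr => j _; rewrite mulr_sumr.
by apply: eq_bigr => i _; rewrite mulrC.
Qed.

Lemma reg_obj_gibbs a b :
  reg_obj c mu (gibbs a b) = \sum_i a i * lmarg (gibbs a b) i + \sum_j b j * rmarg (gibbs a b) j.
Proof.
rewrite -sum_mul_potentials /reg_obj /Hent mulr_sumr -big_split /=.
apply: eq_bigr => e _; rewrite /xlogx gt_eqF ?expR_gt0 // expRK.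
by field; rewrite gt_eqF.
Qed.

Lemma reg_obj_ge_dual a b dL dR y :
  in_simplex y -> marg_ok y dL dR ->
  \sum_i a i * dL i + \sum_j b j * dR j + mu - mu * \sum_e gibbs a b e
  <= reg_obj c mu y.
Proof.
move=> [y0 y1] [mL mR].
have pointwise e : y e * (a e.1 + b e.2) + mu * y e - mu * gibbs a b e
    <= c e * y e + mu * xlogx (y e).
  set W := (a e.1 + b e.2 - c e) / mu.
  have eW : mu * W = a e.1 + b e.2 - c e by rewrite /W mulrC divfK ?gt_eqF.
  have := ler_wpM2l (ltW mu_gt0) (xlogx_ge_dual W (y0 e)).
  have -> : mu * (y e * W + y e - expR W) =
      y e * (a e.1 + b e.2) - c e * y e + mu * y e - mu * expR W.
    by rewrite !mulrDr mulrN mulrCA eW; ring.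
  rewrite /gibbs -/W; lra.
have -> : reg_obj c mu y = \sum_e (c e * y e + mu * xlogx (y e)).
  by rewrite /reg_obj /Hent big_split /= mulr_sumr.
apply: le_trans (ler_sum _ (fun e _ => pointwise e)).
rewrite !big_split /= sum_mul_potentials -mulr_sumr y1 mulr1 sumrN -mulr_sumr.
have -> : \sum_i a i * lmarg y i = \sum_i a i * dL i.
  by apply: eq_bigr => i _; rewrite /lmarg mL.
have -> : \sum_j b j * rmarg y j = \sum_j b j * dR j.
  by apply: eq_bigr => j _; rewrite /rmarg mR.
by [].
Qed.

Lemma OPT_ge_dual a b dL dR : in_simplex dL -> in_simplex dR ->
  \sum_i a i * dL i + \sum_j b j * dR j + mu - mu * \sum_e gibbs a b e
  <= OPT c mu dL dR.
Proof.
move=> [dL0 dL1] [dR0 dR1]; rewrite /OPT; apply: lb_le_inf.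
  pose y e := dL e.1 * dR e.2.
  exists (reg_obj c mu y), y => //; split; [split|split].
  - by move=> e; rewrite mulr_ge0.
  - by rewrite sum_pair /y /=; under eq_bigr do rewrite -mulr_sumr dR1 mulr1.
  - by move=> i; rewrite /y /= -mulr_sumr dR1 mulr1.
  - by move=> j; rewrite /y /= -mulr_suml dL1 mul1r.
by move=> z [y [ys ym] <-]; apply: reg_obj_ge_dual.
Qed.

Lemma marg_err_normalize (x : (L * R)%type -> T) dL dR :
  (forall e, 0 <= x e) -> 0 < \sum_e x e -> \sum_i dL i = 1 -> \sum_j dR j = 1 ->
  marg_err (fun e => x e / \sum_e' x e') dL dR <= 2 * marg_err x dL dR.
Proof.
move=> x0 S0 dL1 dR1; rewrite /marg_err mulrDr.
have lE i : lmarg (fun e => x e / \sum_e' x e') i = lmarg x i / \sum_k lmarg x k.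
  by rewrite sum_lmarg /lmarg mulr_suml.
have rE j : rmarg (fun e => x e / \sum_e' x e') j = rmarg x j / \sum_k rmarg x k.
  by rewrite sum_rmarg /rmarg mulr_suml.
under eq_bigr do rewrite lE; under [X in _ + X]eq_bigr do rewrite rE.
apply: lerD; apply: l1_normalize_le;
  rewrite ?sum_lmarg ?sum_rmarg // => k; exact: sumr_ge0.
Qed.

Lemma scaled_kernel_gibbs (u : L -> T) (v : R -> T) (S : T) i j :
  0 < u i -> 0 < v j -> 0 < S ->
  u i * expR (- c (i, j) / mu) * v j / S
  = gibbs (fun i => mu * ln (u i / S)) (fun j => mu * ln (v j)) (i, j).
Proof.
move=> u0 v0 S0; rewrite /gibbs /=.
have -> : (mu * ln (u i / S) + mu * ln (v j) - c (i, j)) / mu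
          = ln (u i / S) + ln (v j) + - c (i, j) / mu.
  by field; rewrite gt_eqF.
by rewrite !expRD !lnK ?posrE ?divr_gt0 //; field; rewrite gt_eqF.
Qed.

Hypothesis c_ge0 : forall e, 0 <= c e.

(* Entries at most 1 force a + b <= c, in particular at the maximizers of a and b. *)
Lemma gibbs_potentials_bounded (kap : T) (a : L -> T) (b : R -> T) (e0 : (L * R)%type) :
  (forall e, c e <= kap) -> (forall e, gibbs a b e <= 1) ->
  exists A B, [/\ forall i, a i <= A, forall j, b j <= B & A + B <= kap].
Proof.
move=> c_le gibbs_le1.
case: (@arg_maxP _ T L e0.1 predT a isT) => i1 _ hi1.
case: (@arg_maxP _ T R e0.2 predT b isT) => j1 _ hj1.
exists (a i1), (b j1); split=> [i|j|]; [exact: hi1|exact: hj1|].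
have := gibbs_le1 (i1, j1); rewrite expR_le1 pmulr_lle0 ?invr_gt0 //=.
by have := c_le (i1, j1); lra.
Qed.

Lemma gibbs_clip_le (a : L -> T) (b : R -> T) (A B M N : T) e :
  (forall i, a i <= A) -> (forall j, b j <= B) ->
  0 < N -> 0 <= M -> A + B + mu * ln N <= M ->
  gibbs (clip (A - M) a) (clip (B - M) b) e <= gibbs a b e + N^-1.
Proof.
move: e => [i j] aA bB N0 M0 hM; rewrite /gibbs /=.
have /andP[aM aA'] := clip_range M0 (aA i).
have /andP[bM bB'] := clip_range M0 (bB j).
case: (boolP ((A - M <= a i) && (B - M <= b j))) => [/andP[ha hb]|].
  rewrite /clip max_l // max_l //.
  have : 0 < N^-1 by rewrite invr_gt0.
  lra.
rewrite negb_and -!ltNge => clipped.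
have low : clip (A - M) a i + clip (B - M) b j <= A + B - M.
  case/orP: clipped => h.
    by rewrite [clip _ a i]/clip (max_r (ltW h)); lra.
  by rewrite [clip _ b j]/clip (max_r (ltW h)); lra.
have : (clip (A - M) a i + clip (B - M) b j - c (i, j)) / mu <= - ln N.
  by rewrite ler_pdivrMr // mulNr mulrC; have := c_ge0 (i, j); lra.
rewrite -ler_expR expRN lnK ?posrE // => h.
by apply: le_trans h _; rewrite lerDr expR_ge0.
Qed.

Lemma gibbs_reg_obj_le_OPT (kap N : T) (a : L -> T) (b : R -> T) dL dR :
  (forall e, c e <= kap) -> 1 <= N ->
  in_simplex dL -> in_simplex dR -> \sum_e gibbs a b e = 1 ->
  reg_obj c mu (gibbs a b) <= OPT c mu dL dR
    + (kap + mu * ln N) / 2 * marg_err (gibbs a b) dL dR + mu * ((#|L| * #|R|)%:R / N).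
Proof.
move=> c_le N1 sL sR y1.
set y := gibbs a b in y1 *.
have y0 e : 0 <= y e by rewrite expR_ge0.
have [e0 _] : exists e0 : (L * R)%type, true.
  case: (pickP (@predT (L * R)%type)) => [e0|none]; first by exists e0.
  by move: y1; rewrite big_pred0 // => /eqP; rewrite eq_sym oner_eq0.
have y_le1 e : y e <= 1.
  by rewrite -y1 (bigD1 e) //= lerDl sumr_ge0.
have [A [B [aA bB AB]]] := gibbs_potentials_bounded e0 c_le y_le1.
set M := kap + mu * ln N.
have M0 : 0 <= M.
  have := mulr_ge0 (ltW mu_gt0) (ln_ge0 N1); have := c_le e0; have := c_ge0 e0.
  rewrite /M; lra.
pose a' := clip (A - M) a; pose b' := clip (B - M) b.
have y'_le e : gibbs a' b' e <= y e + N^-1.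
  apply: gibbs_clip_le => //; first exact: lt_le_trans ltr01 N1.
  by rewrite /M lerD2r.
have y'_sum : \sum_e gibbs a' b' e <= 1 + (#|L| * #|R|)%:R / N.
  apply: le_trans (ler_sum _ (fun e _ => y'_le e)) _.
  by rewrite big_split /= y1 sumr_const card_prod mulr_natl.
have dual := OPT_ge_dual a' b' sL sR.
have raise : \sum_i a i * lmarg y i + \sum_j b j * rmarg y j
    <= \sum_i a' i * lmarg y i + \sum_j b' j * rmarg y j.
  by apply: lerD; apply: ler_sum => k _; apply: ler_wpM2r;
    rewrite ?sumr_ge0 ?clip_ge.
case: sL sR => [_ dL1] [_ dR1].
have osc (I : finType) (f : I -> T) (F : T) k : (forall k, f k <= F) ->
    `|clip (F - M) f k - (F - M / 2)| <= M / 2.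
  move=> fF; have /andP[lo hi] := clip_range M0 (fF k).
  by rewrite ler_norml; apply/andP; split; lra.
have centerL := centered_pairing_le (etrans (sum_lmarg y) (etrans y1 (esym dL1)))
  (fun i => osc _ _ _ i aA).
have centerR := centered_pairing_le (etrans (sum_rmarg y) (etrans y1 (esym dR1)))
  (fun j => osc _ _ _ j bB).
have mass : mu * \sum_e gibbs a' b' e <= mu + mu * ((#|L| * #|R|)%:R / N).
  by rewrite -[X in X + _]mulr1 -mulrDr ler_wpM2l // ltW.
rewrite reg_obj_gibbs /marg_err mulrDr.
lra.
Qed.

End GibbsPlans.

Theorem mainTheorem14 (T : realType) (L R : finType)
  (c : (L * R)%type -> T) (mu : T) (dL : L -> T) (dR : R -> T)
  (u : L -> T) (v : R -> T) (Delta : T) :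
  (0 < #|L|)%N -> (0 < #|R|)%N ->
  (3 <= #|L| * #|R|)%N ->
  0 < mu ->
  (forall e, 0 <= c e) ->
  in_simplex dL -> in_simplex dR ->
  (forall i, 0 < u i) -> (forall j, 0 < v j) ->
  0 <= Delta ->
  let m := (#|L| * #|R|)%N in
  let Kmat := fun i j => expR (- c (i, j) / mu) in
  let X := fun i j => u i * Kmat i j * v j in
  let x := fun e : (L * R)%type => X e.1 e.2 in
  \sum_(i : L) `| \sum_(j : R) X i j - dL i |
    + \sum_(j : R) `| \sum_(i : L) X i j - dR j | <= Delta ->
  let xhat := fun e => x e / \sum_(e' : (L * R)%type) x e' in
  let Cst := 2 * (\big[Num.max/0]_(e : (L * R)%type) `|c e| + 33 * mu * ln (m%:R)) in
  in_simplex xhat /\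
  reg_obj c mu xhat <= OPT c mu dL dR + 3 * Cst * Delta + mu * (m%:R ^- 30).
Proof.
move=> /card_gt0P[i0 _] /card_gt0P[j0 _] m3 mu0 c0 sL sR u0 v0 D0 m Kmat X x hD xhat Cst.
have x0 e : 0 < x e by rewrite !mulr_gt0 ?expR_gt0.
set S := \sum_e x e.
have S0 : 0 < S by rewrite /S (bigD1 (i0, j0)) //= ltr_pwDl ?sumr_ge0 // => e _; rewrite ltW.
pose a i := mu * ln (u i / S); pose b j := mu * ln (v j).
have xhatE : xhat = gibbs c mu a b.
  by apply/funext => -[i j]; apply: scaled_kernel_gibbs.
have xhat1 : \sum_e xhat e = 1 by rewrite -mulr_suml divff ?gt_eqF.
split; first by split=> // e; rewrite divr_ge0 // ltW.
set kap := \big[Num.max/0]_e `|c e|.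
have c_le e : c e <= kap by apply: le_trans (ler_norm _) (le_bigmax _ _ e).
have m1 : 1 <= m%:R :> T by rewrite ler1n; apply: leq_trans m3.
have N1 : 1 <= m%:R ^+ 31 :> T := exprn_ege1 31 m1.
have err : marg_err xhat dL dR <= 2 * Delta.
  apply: le_trans (marg_err_normalize (fun e => ltW (x0 e)) S0 sL.2 sR.2) _.
  by rewrite ler_wpM2l.
rewrite xhatE in xhat1 err *.
apply: le_trans (gibbs_reg_obj_le_OPT mu0 c0 c_le N1 sL sR xhat1) _.
have m0 : 0 < m%:R :> T by apply: lt_le_trans ltr01 m1.
have lnm0 : 0 <= ln (m%:R : T) by apply: ln_ge0.
have kap0 : 0 <= kap by apply: le_trans (c0 (i0, j0)) (c_le _).
rewrite lnXn // -[ln _ *+ 31]mulr_natr.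
have -> : mu * (m%:R / m%:R ^+ 31) = mu / m%:R ^+ 30.
  by rewrite exprSr; field; rewrite gt_eqF ?exprn_gt0.
set K := kap + mu * (ln m%:R * 31%:R).
have K0 : 0 <= K by rewrite addr_ge0 ?mulr_ge0 // ltW.
have errK : K / 2 * marg_err (gibbs c mu a b) dL dR <= K * Delta.
  apply: le_trans (ler_wpM2l _ err) _; first by rewrite divr_ge0.
  by rewrite mulrA divfK ?pnatr_eq0.
have KC : K * Delta <= 3 * Cst * Delta.
  by rewrite ler_wpM2r // /K /Cst -/kap; have := mulr_ge0 (ltW mu0) lnm0; lra.
lra.
Qed.
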